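(* Let $A$ be a commutative noetherian local ring, let $x,y\in A$ be an exact pair of zero divisors, and let $a\in A$. Then there is an isomorphism of $A$-algebras $\operatorname{End}_A(G_a)^{\mathrm{op}}\cong\operatorname{End}_A(H_a)$. In particular, $G_a$ is indecomposable if and only if $H_a$ is indecomposable.
   Context: Two non-units $x,y\in A$ form an exact pair of zero divisors if $\operatorname{Ann}_A(x)=(y)$ and $\operatorname{Ann}_A(y)=(x)$. For $a\in A$, let $\gamma_a=\begin{pmatrix} x & a\\ 0 & y\end{pmatrix}$ and $\eta_a=\begin{pmatrix} y & -a\\ 0 & x\end{pmatrix}$, viewed as $A$-linear maps $A^2\to A^2$ acting on column vectors, and set $G_a=\operatorname{Coker}\gamma_a$, $H_a=\operatorname{Coker}\eta_a$. *)

From HB Require Import structures.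
From mathcomp Require Import all_boot all_order all_algebra.
Set Implicit Arguments.
Unset Strict Implicit.
Unset Printing Implicit Defensive.
Import GRing.Theory.
Local Open Scope ring_scope.

Section RingDefs.
Variable A : comNzRingType.

Definition is_ideal (I : A -> Prop) : Prop :=
  [/\ I 0, (forall u v, I u -> I v -> I (u + v)) & (forall r u, I u -> I (r * u))].

Definition is_maximal_ideal (I : A -> Prop) : Prop :=
  [/\ is_ideal I, ~ I 1 &
      forall J : A -> Prop, is_ideal J -> (forall u, I u -> J u) ->
        J 1 \/ (forall u, J u -> I u)].

Definition local_ring : Prop :=
  exists m : A -> Prop, is_maximal_ideal m /\
    forall m' : A -> Prop, is_maximal_ideal m' -> forall u, m' u <-> m u.

Definition noetherian_ring : Prop :=
  forall I : A -> Prop, is_ideal I ->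
    exists s : seq A, forall u, I u <->
      exists c : 'I_(size s) -> A, u = \sum_(i < size s) c i * s`_i.

Definition nonunit (u : A) : Prop := ~ exists v, u * v = 1.

Definition ann_is_principal (u v : A) : Prop :=
  forall z, z * u = 0 <-> exists r, z = r * v.

Definition exact_pair (x y : A) : Prop :=
  [/\ nonunit x, nonunit y, ann_is_principal x y & ann_is_principal y x].

Definition mx2 (p q r s : A) : 'M[A]_2 :=
  \matrix_(i < 2, j < 2)
    (if (i : nat) == 0%N then (if (j : nat) == 0%N then p else q)
     else (if (j : nat) == 0%N then r else s)).

Definition gamma_mx (x y a : A) : 'M[A]_2 := mx2 x a 0 y.
Definition eta_mx (x y a : A) : 'M[A]_2 := mx2 y (- a) 0 x.

Definition is_coker (g : 'M[A]_2) (M : lmodType A) (p : 'cV[A]_2 -> M) : Prop :=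
  [/\ linear p, (forall m : M, exists v, p v = m) &
      forall v, p v = 0 <-> exists w, v = g *m w].

(** A-linear endomorphisms, compared extensionally *)
Definition endo (M : lmodType A) (f : M -> M) : Prop := linear f.

Definition op_algebra_iso (M N : lmodType A) (Phi : (M -> M) -> (N -> N)) : Prop :=
  (forall f, endo f -> endo (Phi f)) /\
  (forall f g, endo f -> endo g -> f =1 g -> Phi f =1 Phi g) /\
  (forall f g, endo f -> endo g -> Phi f =1 Phi g -> f =1 g) /\
  (forall h, endo h -> exists2 f, endo f & Phi f =1 h) /\
  (forall f g, endo f -> endo g ->
     Phi (fun m => f m + g m) =1 (fun n => Phi f n + Phi g n)) /\
  (forall (c : A) f, endo f -> Phi (fun m => c *: f m) =1 (fun n => c *: Phi f n)) /\
  Phi id =1 id /\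
  (forall f g, endo f -> endo g -> Phi (f \o g) =1 (Phi g \o Phi f)).

Definition opEnd_iso_End (M N : lmodType A) : Prop :=
  exists Phi : (M -> M) -> (N -> N), op_algebra_iso Phi.

Definition submodule (M : lmodType A) (S : M -> Prop) : Prop :=
  [/\ S 0, (forall u v, S u -> S v -> S (u + v)) & (forall (c : A) u, S u -> S (c *: u))].

Definition indecomposable (M : lmodType A) : Prop :=
  (exists m : M, m <> 0) /\
  forall S T : M -> Prop, submodule S -> submodule T ->
    (forall m, S m -> T m -> m = 0) ->
    (forall m, exists2 s, S s & exists2 t, T t & m = s + t) ->
    (forall m, S m -> m = 0) \/ (forall m, T m -> m = 0).

End RingDefs.

(* Because [x y = 0] and Ann(x) = (y), Ann(y) = (x), the matrices [gamma] and
   [eta] form an exact pair on 2x2 matrices: [gamma X = 0] iff [X = eta Y], and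
   symmetrically. The 2x2 adjugate is linear, reverses products and exchanges
   [gamma] and [eta]. An endomorphism [f] of [G = Coker gamma] lifts to a matrix
   [al] stabilising [Im gamma]; exactness gives [eta al = be eta], and then
   [adj be] stabilises [Im eta] and induces [Phi f] on [H = Coker eta].
   Exactness makes [Phi] well defined and bijective, and since the adjugate
   reverses products, [Phi] is an isomorphism End(G)^op = End(H). A module is
   indecomposable iff its only idempotent endomorphisms are 0 and 1, which any
   such isomorphism preserves. *)

From HB Require Import structures.
From mathcomp Require Import all_boot all_order all_algebra ring.
From Stdlib Require Import Classical ClassicalEpsilon.
Set Implicit Arguments. Unset Strict Implicit. Unset Printing Implicit Defensive.
Import GRing.Theory.
Local Open Scope ring_scope.

Section LinearFun.
Variables (A : comNzRingType) (M N : lmodType A) (f : M -> N).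
Hypothesis lf : linear f.

Lemma lin0 : f 0 = 0.
Proof. by apply: (addrI (f 0)); rewrite addr0 -{1}(scale1r (f 0)) -lf scale1r addr0. Qed.
Lemma linD u v : f (u + v) = f u + f v.
Proof. by rewrite -{1}[u]scale1r lf scale1r. Qed.
Lemma linZ c u : f (c *: u) = c *: f u.
Proof. by rewrite -[c *: u]addr0 lf lin0 addr0. Qed.
Lemma linB u v : f (u - v) = f u - f v.
Proof. by rewrite linD -scaleN1r linZ scaleN1r. Qed.
Lemma lin_sum I (r : seq I) (P : pred I) (F : I -> M) :
  f (\sum_(i <- r | P i) F i) = \sum_(i <- r | P i) f (F i).
Proof. exact: (big_morph f linD lin0). Qed.
End LinearFun.

Section TwoByTwo.
Variable A : comNzRingType.
Implicit Types (p q r s c : A) (X Y : 'M[A]_2).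

Lemma mx2E X : X = mx2 (X 0 0) (X 0 1) (X 1 0) (X 1 1).
Proof.
apply/matrixP => i j; rewrite mxE.
by case: i => [[|[|i]] ?] //; case: j => [[|[|j]] ?] //=; congr (X _ _); apply: val_inj.
Qed.

Lemma mx2_inj p q r s p' q' r' s' :
  mx2 p q r s = mx2 p' q' r' s' -> [/\ p = p', q = q', r = r' & s = s'].
Proof. by move=> /matrixP E; move: (E 0 0) (E 0 1) (E 1 0) (E 1 1); rewrite !mxE. Qed.

Lemma mul_mx2 p q r s p' q' r' s' :
  mx2 p q r s *m mx2 p' q' r' s' =
  mx2 (p * p' + q * r') (p * q' + q * s') (r * p' + s * r') (r * q' + s * s').
Proof.
apply/matrixP => i j; rewrite !mxE big_ord_recl big_ord1 !mxE /=.
by case: i => [[|[|i]] ?] //; case: j => [[|[|j]] ?].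
Qed.

Lemma add_mx2 p q r s p' q' r' s' :
  mx2 p q r s + mx2 p' q' r' s' = mx2 (p + p') (q + q') (r + r') (s + s').
Proof. by apply/matrixP => i j; rewrite !mxE; case: ifP; case: ifP. Qed.

Lemma scale_mx2 c p q r s : c *: mx2 p q r s = mx2 (c * p) (c * q) (c * r) (c * s).
Proof. by apply/matrixP => i j; rewrite !mxE; case: ifP; case: ifP. Qed.

Lemma mx2_0 : mx2 0 0 0 0 = 0 :> 'M[A]_2.
Proof. by apply/matrixP => i j; rewrite !mxE; case: ifP; case: ifP. Qed.

Lemma mx2_1 : mx2 1 0 0 1 = 1%:M :> 'M[A]_2.
Proof.
apply/matrixP => i j; rewrite !mxE.
by case: i => [[|[|i]] ?] //; case: j => [[|[|j]] ?].
Qed.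

(* Unlike [\adj] in general, the 2x2 adjugate is linear. *)
Definition adj2 X := mx2 (X 1 1) (- X 0 1) (- X 1 0) (X 0 0).

Lemma adj2_mx2 p q r s : adj2 (mx2 p q r s) = mx2 s (- q) (- r) p.
Proof. by rewrite /adj2 !mxE. Qed.

Lemma adj2K : involutive adj2.
Proof. by move=> X; rewrite {2}[X]mx2E /adj2 !mxE /= !opprK. Qed.

Lemma adj2M X Y : adj2 (X *m Y) = adj2 Y *m adj2 X.
Proof. rewrite [X]mx2E [Y]mx2E mul_mx2 !adj2_mx2 mul_mx2; congr mx2; ring. Qed.

Lemma adj2D X Y : adj2 (X + Y) = adj2 X + adj2 Y.
Proof. rewrite [X]mx2E [Y]mx2E add_mx2 !adj2_mx2 add_mx2; congr mx2; ring. Qed.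

Lemma adj2Z c X : adj2 (c *: X) = c *: adj2 X.
Proof. rewrite [X]mx2E scale_mx2 !adj2_mx2 scale_mx2; congr mx2; ring. Qed.

Lemma adj2B X Y : adj2 (X - Y) = adj2 X - adj2 Y.
Proof. by rewrite adj2D -scaleN1r adj2Z scaleN1r. Qed.

Lemma adj2_0 : adj2 0 = 0.
Proof. by rewrite -(scale0r 0) adj2Z !scale0r. Qed.

Lemma adj2_1 : adj2 1%:M = 1%:M.
Proof. by rewrite -mx2_1 adj2_mx2 oppr0. Qed.

End TwoByTwo.

Section Cokernel.
Variables (A : comNzRingType) (g : 'M[A]_2) (M : lmodType A) (p : 'cV[A]_2 -> M).
Hypothesis cokerM : is_coker g p.

Definition lifts (f : M -> M) (al : 'M[A]_2) := forall v, p (al *m v) = f (p v).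

Definition induced (al : 'M[A]_2) (m : M) : M :=
  p (al *m epsilon (inhabits 0) (fun v => p v = m)).

Lemma coker_linear : linear p. Proof. by case: cokerM. Qed.
Lemma coker_surj m : exists v, p v = m. Proof. by case: cokerM. Qed.

Lemma coker_image v : p (g *m v) = 0.
Proof. by case: cokerM => _ _ ker; apply/ker; exists v. Qed.

Lemma coker_eqP u w : p u = p w <-> exists z, u - w = g *m z.
Proof.
case: cokerM => lp _ ker; rewrite -ker (linB lp).
by split => [->|/eqP]; [rewrite subrr | rewrite subr_eq0 => /eqP].
Qed.

Lemma coker_mx (X : 'M[A]_2) : (forall v, p (X *m v) = 0) -> exists Y, X = g *m Y.
Proof.
case: cokerM => _ _ ker HX.
have col_ex (j : 'I_2) : exists w : 'cV[A]_2, X *m delta_mx j 0 = g *m w.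
  by apply/ker; rewrite HX.
have [w Hw] := fin_all_exists col_ex.
exists (\matrix_(i, j) w j i 0); apply/matrixP => i j.
have /matrixP/(_ i 0) := Hw j; rewrite -colE !mxE => ->.
by apply: eq_bigr => k _; rewrite mxE.
Qed.

Lemma coker_lift f : linear f -> exists al, lifts f al.
Proof.
case: cokerM => lp sur _ lf.
have col_ex (j : 'I_2) : exists w : 'cV[A]_2, p w = f (p (delta_mx j 0)) by apply: sur.
have [w Hw] := fin_all_exists col_ex.
exists (\matrix_(i, j) w j i 0) => v.
have -> : v = \sum_j v j 0 *: delta_mx j 0.
  by rewrite {1}[v]matrix_sum_delta; apply: eq_bigr => j _; rewrite big_ord1.
rewrite mulmx_sumr !(lin_sum lp) (lin_sum lf); apply: eq_bigr => j _.
rewrite -scalemxAr -colE !(linZ lp) (linZ lf) -Hw; congr (_ *: p _).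
by apply/matrixP => i k; rewrite !mxE ord1.
Qed.

Lemma lifts_ext f f' al : lifts f al -> lifts f' al -> f =1 f'.
Proof. by move=> Hf Hf' m; have [v <-] := coker_surj m; rewrite -Hf Hf'. Qed.

Lemma lifts_linear f al : lifts f al -> linear f.
Proof.
move=> Hf c m1 m2; have [v1 <-] := coker_surj m1; have [v2 <-] := coker_surj m2.
have lp := coker_linear.
by rewrite -(linZ lp) -(linD lp) -!Hf mulmxDr -scalemxAr (linD lp) (linZ lp).
Qed.

Lemma lifts_stable f al : lifts f al -> exists d, al *m g = g *m d.
Proof.
move=> Hf; apply: coker_mx => v.
by rewrite -mulmxA Hf coker_image (lin0 (lifts_linear Hf)).
Qed.

Lemma lifts_sub f al al' : lifts f al -> lifts f al' -> exists Y, al - al' = g *m Y.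
Proof.
move=> Hf Hf'; apply: coker_mx => v.
by rewrite mulmxBl (linB coker_linear) Hf Hf' subrr.
Qed.

Lemma lifts_shift f al Y : lifts f al -> lifts f (al + g *m Y).
Proof. by move=> Hf v; rewrite mulmxDl (linD coker_linear) -mulmxA coker_image addr0. Qed.

Lemma induced_lifts al d : al *m g = g *m d -> lifts (induced al) al.
Proof.
move=> Hd v; rewrite /induced; set w := epsilon _ _.
have /esym/coker_eqP [z Hz] : p w = p v.
  by apply: (epsilon_spec (inhabits 0) (fun w => p w = p v)); exists v.
by apply/coker_eqP; exists (d *m z); rewrite -mulmxBr Hz !mulmxA Hd.
Qed.

Lemma lifts_add f f' al al' :
  lifts f al -> lifts f' al' -> lifts (fun m => f m + f' m) (al + al').
Proof. by move=> Hf Hf' v; rewrite mulmxDl (linD coker_linear) Hf Hf'. Qed.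

Lemma lifts_scale c f al : lifts f al -> lifts (fun m => c *: f m) (c *: al).
Proof. by move=> Hf v; rewrite -scalemxAl (linZ coker_linear) Hf. Qed.

Lemma lifts_id : lifts id 1%:M.
Proof. by move=> v; rewrite mul1mx. Qed.

Lemma lifts_comp f f' al al' : lifts f al -> lifts f' al' -> lifts (f \o f') (al *m al').
Proof. by move=> Hf Hf' v; rewrite -mulmxA Hf Hf'. Qed.
End Cokernel.

Definition exact_mx (A : comNzRingType) (g e : 'M[A]_2) :=
  forall X : 'M[A]_2, g *m X = 0 <-> exists Y, X = e *m Y.

Section ExactMatrixPair.
Variables (A : comNzRingType) (g e : 'M[A]_2).
Hypotheses (exact_ge : exact_mx g e) (exact_eg : exact_mx e g) (adj_g : adj2 g = e).

Lemma adj_e : adj2 e = g.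
Proof. by rewrite -adj_g adj2K. Qed.

Lemma mul_ge : g *m e = 0.
Proof. by apply/exact_ge; exists 1%:M; rewrite mulmx1. Qed.

Lemma mul_eg : e *m g = 0.
Proof. by apply/exact_eg; exists 1%:M; rewrite mulmx1. Qed.

(* Right kernels follow from left ones by applying the adjugate. *)
Lemma rker_g (X : 'M[A]_2) : X *m g = 0 -> exists Y, X = Y *m e.
Proof.
move=> HX; have /exact_eg [Y HY] : e *m adj2 X = 0 by rewrite -adj_g -adj2M HX adj2_0.
by exists (adj2 Y); rewrite -adj_g -adj2M -HY adj2K.
Qed.

Lemma rker_e (X : 'M[A]_2) : X *m e = 0 -> exists Y, X = Y *m g.
Proof.
move=> HX; have /exact_ge [Y HY] : g *m adj2 X = 0 by rewrite -adj_e -adj2M HX adj2_0.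
by exists (adj2 Y); rewrite -adj_e -adj2M -HY adj2K.
Qed.

Lemma companion_exists (al d : 'M[A]_2) :
  al *m g = g *m d -> exists be, e *m al = be *m e.
Proof. by move=> Hd; apply: rker_g; rewrite -mulmxA Hd mulmxA mul_eg mul0mx. Qed.

Lemma adj_companion_stable (al be : 'M[A]_2) :
  e *m al = be *m e -> exists Z, adj2 be *m e = e *m Z.
Proof.
move=> Hbe; have [Y HY] : exists Y, g *m be = Y *m g.
  by apply: rker_e; rewrite -mulmxA -Hbe mulmxA mul_ge mul0mx.
by exists (adj2 Y); rewrite -adj_g -!adj2M HY.
Qed.

Variables (G H : lmodType A) (pG : 'cV[A]_2 -> G) (pH : 'cV[A]_2 -> H).
Hypotheses (cokerG : is_coker g pG) (cokerH : is_coker e pH).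

(* [Phi f] is induced by [adj2 be], where [al] lifts [f] and [e al = be e]. *)
Definition companion (al : 'M[A]_2) : 'M[A]_2 :=
  epsilon (inhabits 0) (fun be => e *m al = be *m e).

Definition Phi (f : G -> G) : H -> H :=
  induced pH (adj2 (companion (epsilon (inhabits 0) (lifts pG f)))).

Lemma Phi_lifts f al be :
  lifts pG f al -> e *m al = be *m e -> lifts pH (Phi f) (adj2 be).
Proof.
move=> Hal Hbe; rewrite /Phi.
set al0 := epsilon _ _; set be0 := companion al0.
have Hal0 : lifts pG f al0.
  by apply: (epsilon_spec (inhabits 0) (lifts pG f)); exists al.
have [d0 Hd0] := lifts_stable cokerG Hal0.
have Hbe0 : e *m al0 = be0 *m e.
  have [be1 Hbe1] := companion_exists Hd0.
  by apply: (epsilon_spec (inhabits 0) (fun be => e *m al0 = be *m e)); exists be1.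
have [Z HZ] := adj_companion_stable Hbe0.
have [d Hd] := lifts_sub cokerG Hal0 Hal.
have [Y HY] : exists Y, be0 - be = Y *m g.
  by apply: rker_e; rewrite mulmxBl -Hbe -Hbe0 -mulmxBr Hd mulmxA mul_eg mul0mx.
have -> : adj2 be = adj2 be0 + e *m (- adj2 Y).
  by rewrite mulmxN -adj_g -adj2M -HY adj2B opprB addrC subrK.
exact/lifts_shift/(induced_lifts cokerH HZ).
Qed.

Lemma Phi_lift f : linear f ->
  exists al be, [/\ lifts pG f al, e *m al = be *m e & lifts pH (Phi f) (adj2 be)].
Proof.
move=> lf; have [al Hal] := coker_lift cokerG lf.
have [d Hd] := lifts_stable cokerG Hal; have [be Hbe] := companion_exists Hd.
by exists al, be; split; last exact: Phi_lifts.
Qed.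

Lemma Phi_linear f : linear f -> linear (Phi f).
Proof. by move=> /Phi_lift [al [be [_ _ /(lifts_linear cokerH)]]]. Qed.

Lemma Phi_inj f f' : linear f -> linear f' -> Phi f =1 Phi f' -> f =1 f'.
Proof.
move=> /Phi_lift [al [be [Hal Hbe Hf]]] /Phi_lift [al' [be' [Hal' Hbe' Hf']]] E.
have [W HW] : exists W, adj2 be - adj2 be' = e *m W.
  by apply: (lifts_sub cokerH Hf) => v; rewrite Hf' E.
have [d Hd] : exists d, al' - al = g *m d.
  apply/exact_eg; rewrite mulmxBr Hbe Hbe' -mulmxBl.
  have -> : be' - be = - adj2 W *m g.
    by rewrite mulNmx -adj_e -adj2M -HW adj2B !adj2K opprB.
  by rewrite -mulmxA mul_ge mulmx0.
apply: (lifts_ext cokerG Hal).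
have -> : al = al' + g *m (- d) by rewrite mulmxN -Hd opprB addrC subrK.
exact: lifts_shift.
Qed.

Lemma Phi_surj h : linear h -> exists2 f, linear f & Phi f =1 h.
Proof.
move=> lh; have [mu Hmu] := coker_lift cokerH lh.
have [N HN] := lifts_stable cokerH Hmu.
have [al Hal] : exists al, adj2 mu *m e = e *m al.
  apply/exact_ge; rewrite mulmxA -adj_e -adj2M HN adj2M adj_e -mulmxA mul_ge.
  by rewrite mulmx0.
have [d Hd] : exists d, al *m g = g *m d.
  by apply/exact_eg; rewrite mulmxA -Hal -mulmxA mul_eg mulmx0.
have Hf := induced_lifts cokerG Hd.
exists (induced pG al); first exact: (lifts_linear cokerG Hf).
by apply: (lifts_ext cokerH (Phi_lifts Hf (esym Hal))); rewrite adj2K.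
Qed.

Lemma Phi_add f f' : linear f -> linear f' ->
  Phi (fun m => f m + f' m) =1 (fun n => Phi f n + Phi f' n).
Proof.
move=> /Phi_lift [al [be [Hal Hbe Hf]]] /Phi_lift [al' [be' [Hal' Hbe' Hf']]].
have Hsum : e *m (al + al') = (be + be') *m e by rewrite mulmxDr mulmxDl Hbe Hbe'.
have HD : lifts pH (fun n => Phi f n + Phi f' n) (adj2 (be + be')).
  by rewrite adj2D; exact: (lifts_add cokerH Hf Hf').
exact: (lifts_ext cokerH (Phi_lifts (lifts_add cokerG Hal Hal') Hsum) HD).
Qed.

Lemma Phi_scale c f : linear f -> Phi (fun m => c *: f m) =1 (fun n => c *: Phi f n).
Proof.
move=> /Phi_lift [al [be [Hal Hbe Hf]]].
have Hc : e *m (c *: al) = (c *: be) *m e by rewrite -scalemxAl -scalemxAr Hbe.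
have HZ : lifts pH (fun n => c *: Phi f n) (adj2 (c *: be)).
  by rewrite adj2Z; exact: (lifts_scale cokerH c Hf).
exact: (lifts_ext cokerH (Phi_lifts (lifts_scale cokerG c Hal) Hc) HZ).
Qed.

Lemma Phi_id : Phi id =1 id.
Proof.
have H1 : e *m 1%:M = 1%:M *m e by rewrite mulmx1 mul1mx.
have HI : lifts pH id (adj2 1%:M) by rewrite adj2_1; apply: lifts_id.
exact: (lifts_ext cokerH (Phi_lifts (lifts_id pG) H1) HI).
Qed.

Lemma Phi_comp f f' : linear f -> linear f' -> Phi (f \o f') =1 Phi f' \o Phi f.
Proof.
move=> /Phi_lift [al [be [Hal Hbe Hf]]] /Phi_lift [al' [be' [Hal' Hbe' Hf']]].
have Hmul : e *m (al *m al') = (be *m be') *m e by rewrite mulmxA Hbe -!mulmxA Hbe'.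
have HM : lifts pH (Phi f' \o Phi f) (adj2 (be *m be')).
  by rewrite adj2M; apply: lifts_comp.
exact: (lifts_ext cokerH (Phi_lifts (lifts_comp Hal Hal') Hmul) HM).
Qed.

Lemma Phi_op_algebra_iso : op_algebra_iso Phi.
Proof.
split; first exact: Phi_linear.
split.
  move=> f f' /Phi_lift [al [be [Hal Hbe Hf]]] _ E.
  have Hal' : lifts pG f' al by move=> v; rewrite Hal E.
  exact: (lifts_ext cokerH Hf (Phi_lifts Hal' Hbe)).
split; first exact: Phi_inj.
split; first exact: Phi_surj.
split; first exact: Phi_add.
split; first by move=> c f; apply: Phi_scale.
by split; [exact: Phi_id | exact: Phi_comp].
Qed.
End ExactMatrixPair.

Section Indecomposable.
Variables (A : comNzRingType) (M : lmodType A).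

Definition trivial_idempotents :=
  forall f : M -> M, endo f -> f \o f =1 f -> f =1 (fun=> 0) \/ f =1 id.

Lemma submodule_fixed (f : M -> M) : endo f -> submodule (fun m => f m = m).
Proof.
by move=> lf; split=> [|u v Hu Hv|c u Hu]; rewrite ?(lin0 lf) ?(linD lf) ?(linZ lf) ?Hu ?Hv.
Qed.

Lemma submodule_kernel (f : M -> M) : endo f -> submodule (fun m => f m = 0).
Proof.
move=> lf; split=> [|u v Hu Hv|c u Hu]; rewrite ?(lin0 lf) ?(linD lf) ?(linZ lf) ?Hu ?Hv //.
  by rewrite addr0.
by rewrite scaler0.
Qed.

Lemma complement_projection (S T : M -> Prop) :
  submodule S -> submodule T -> (forall m, S m -> T m -> m = 0) ->
  (forall m, exists2 s, S s & exists2 t, T t & m = s + t) ->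
  exists pr : M -> M, [/\ endo pr, forall m, S (pr m),
    forall s, S s -> pr s = s & forall t, T t -> pr t = 0].
Proof.
move=> [S0 SD SZ] [T0 TD TZ] ST0 ST.
have SB u v : S u -> S v -> S (u - v).
  by move=> Su Sv; rewrite -scaleN1r; apply: SD => //; apply: SZ.
have TB u v : T u -> T v -> T (u - v).
  by move=> Tu Tv; rewrite -scaleN1r; apply: TD => //; apply: TZ.
pose P m s := S s /\ T (m - s).
pose pr m := epsilon (inhabits 0) (P m).
have prP m : P m (pr m).
  apply: epsilon_spec; have [s Ss [t Tt ->]] := ST m.
  by exists s; split; rewrite // addrC addKr.
have prE m s : P m s -> pr m = s.
  move=> [Ss Ts]; have [Sp Tp] := prP m; apply/eqP; rewrite -subr_eq0; apply/eqP.
  apply: ST0; first exact: SB.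
  have -> : pr m - s = (m - s) - (m - pr m) by rewrite opprB addrCA addrAC subrr add0r.
  exact: TB.
exists pr; split=> [c m1 m2|m|s Ss|t Tt]; first apply: prE.
- have [S1 T1] := prP m1; have [S2 T2] := prP m2.
  split; first by apply: SD => //; apply: SZ.
  by rewrite opprD addrACA -scalerBr; apply: TD => //; apply: TZ.
- exact: (prP m).1.
- by apply: prE; split; rewrite ?subrr.
- by apply: prE; split; rewrite ?subr0.
Qed.

Lemma indecomposableP :
  indecomposable M <-> (exists m : M, m <> 0) /\ trivial_idempotents.
Proof.
split=> [[nz dec]|[nz idem]]; split=> //.
  move=> f lf ff; have fK m : f (f m) = f m := ff m.
  case: (dec _ _ (submodule_fixed lf) (submodule_kernel lf)) => [||S0|T0].
  - by move=> m -> ->.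
  - move=> m; exists (f m); first exact: fK.
    exists (m - f m); first by rewrite (linB lf) fK subrr.
    by rewrite addrCA subrr addr0.
  - by left=> m; apply: S0; apply: fK.
  - right=> m; apply/eqP; rewrite -subr_eq0; apply/eqP/T0.
    by rewrite (linB lf) fK subrr.
move=> S T sS sT ST0 ST.
have [pr [lpr Spr prS prT]] := complement_projection sS sT ST0 ST.
have [pr0|pr1] := idem _ lpr (fun m => prS _ (Spr m)).
- by left=> s Ss; rewrite -(prS s Ss) pr0.
- by right=> t Tt; rewrite -(prT t Tt) pr1.
Qed.

End Indecomposable.

Lemma op_algebra_iso_indecomposable (A : comNzRingType) (M N : lmodType A)
    (Phi : (M -> M) -> (N -> N)) :
  op_algebra_iso Phi -> indecomposable M -> indecomposable N.
Proof.
move=> [Pend [Pcong [Pinj [Psurj [_ [Pscale [Pid Pcomp]]]]]]].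
move=> /indecomposableP [[m0 nz_m0] idem]; apply/indecomposableP.
have lid : endo (@id M) by [].
have l0 : endo (fun m : M => 0 *: m) by move=> c u v; rewrite !scale0r scaler0 addr0.
have P0 n : Phi (fun m => 0 *: m) n = 0 by rewrite (Pscale 0 id lid) scale0r.
split.
  apply: NNPP => N0; apply: nz_m0; rewrite -(scale0r m0).
  apply: (Pinj _ _ lid l0) => n; rewrite P0 Pid.
  by apply: NNPP => nz; apply: N0; exists n.
move=> h lh hh; have [f lf Hf] := Psurj h lh.
have ff : f \o f =1 f.
  apply: Pinj => // [c u v|n]; first by rewrite /= !lf.
  by rewrite Pcomp //= !Hf; apply: hh.
have [f0|f1] := idem f lf ff.
- by left=> n; rewrite -Hf -(P0 n); apply: Pcong => // m; rewrite f0 scale0r.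
- by right=> n; rewrite -Hf (Pcong _ _ lf lid f1) Pid.
Qed.

Section GammaEta.
Variables (A : comNzRingType) (x y : A).
Hypotheses (ann_x : ann_is_principal x y) (ann_y : ann_is_principal y x).

Lemma exact_pair_mul0 : x * y = 0.
Proof. by apply/ann_y; exists 1; rewrite mul1r. Qed.

Lemma gamma_kernel_entries a u v : x * u + a * v = 0 -> y * v = 0 ->
  exists s r, u = y * s - a * r /\ v = x * r.
Proof.
move=> xu yv; have [r Hr] : exists r, v = r * x by apply/ann_y; rewrite mulrC.
have [s Hs] : exists s, u + a * r = s * y.
  by apply/ann_x; rewrite mulrDl -mulrA -Hr mulrC xu.
by exists s, r; split; [rewrite [y * s]mulrC -Hs; ring | rewrite Hr mulrC].
Qed.

Lemma gamma_eta_exact a : exact_mx (gamma_mx x y a) (eta_mx x y a).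
Proof.
move=> X; split=> [|[Y ->]].
  rewrite /gamma_mx [X]mx2E mul_mx2 -mx2_0 => /mx2_inj[e1 e2].
  rewrite !mul0r !add0r => e3 e4.
  have [s1 [r1 [-> ->]]] := gamma_kernel_entries e1 e3.
  have [s2 [r2 [-> ->]]] := gamma_kernel_entries e2 e4.
  by exists (mx2 s1 s2 r1 r2); rewrite /eta_mx mul_mx2; congr mx2; ring.
have yx : y * x = 0 by rewrite mulrC exact_pair_mul0.
rewrite mulmxA /gamma_mx /eta_mx mul_mx2 [Y]mx2E mul_mx2 -mx2_0.
by congr mx2; rewrite ?exact_pair_mul0 ?yx; ring.
Qed.

End GammaEta.

Lemma eta_gamma_exact (A : comNzRingType) (x y a : A) :
  ann_is_principal x y -> ann_is_principal y x ->
  exact_mx (eta_mx x y a) (gamma_mx x y a).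
Proof.
move=> ann_x ann_y; have -> : gamma_mx x y a = eta_mx y x (- a) by rewrite /eta_mx opprK.
exact: (gamma_eta_exact ann_y ann_x (- a)).
Qed.

Lemma adj2_gamma (A : comNzRingType) (x y a : A) : adj2 (gamma_mx x y a) = eta_mx x y a.
Proof. by rewrite adj2_mx2 oppr0. Qed.

Theorem corollary4p3 (A : comNzRingType) (x y a : A)
    (G H : lmodType A) (pG : 'cV[A]_2 -> G) (pH : 'cV[A]_2 -> H) :
  noetherian_ring A -> local_ring A -> exact_pair x y ->
  is_coker (gamma_mx x y a) pG -> is_coker (eta_mx x y a) pH ->
  opEnd_iso_End G H /\ (indecomposable G <-> indecomposable H).
Proof.
move=> _ _ [_ _ ann_x ann_y] cokerG cokerH.
have ge := gamma_eta_exact ann_x ann_y a; have eg := eta_gamma_exact a ann_x ann_y.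
have adj_g := adj2_gamma x y a.
have isoGH := Phi_op_algebra_iso ge eg adj_g cokerG cokerH.
have isoHG := Phi_op_algebra_iso eg ge (adj_e adj_g) cokerH cokerG.
split; first by eexists; exact: isoGH.
split; first exact: (op_algebra_iso_indecomposable isoGH).
exact: (op_algebra_iso_indecomposable isoHG).
Qed.
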